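(* Let $n\ge2$ be even, let $Q(x)=\sum_{i=1}^{n/2-1}Tr_1^n(x^{2^i+1})+Tr_1^{n/2}(x^{2^{n/2}+1})$ on $\mathbb{F}_{2^n}$, and let $f:\mathbb{F}_{2^n}\to\mathbb{F}_2$. Then $f$ is bent-negabent if and only if $f+Q$ is bent-negabent.
   Context: $Tr_1^m(z)=z+z^2+\dots+z^{2^{m-1}}$; $Tr=Tr_1^n$. Fix a self-dual basis $\{\alpha_i\}$ of $\mathbb{F}_{2^n}$ over $\mathbb{F}_2$ ($Tr(\alpha_i\alpha_j)=\delta_{ij}$), identify $\mathbb{F}_{2^n}$ with $\mathbb{F}_2^n$ via coordinates, and let $wt(x)$ be the number of nonzero coordinates. For $g:\mathbb{F}_{2^n}\to\mathbb{F}_2$: $g$ is bent if $\left|\sum_x(-1)^{g(x)+Tr(\mu x)}\right|=2^{n/2}$ for all $\mu$; negabent if $\left|\sum_x(-1)^{g(x)+Tr(\mu x)}\mathrm{i}^{wt(x)}\right|=2^{n/2}$ for all $\mu$ ($\mathrm{i}=\sqrt{-1}$); bent-negabent if both. *)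

From HB Require Import structures.
From mathcomp Require Import all_boot all_order all_algebra all_field.
Set Implicit Arguments. Unset Strict Implicit. Unset Printing Implicit Defensive.
Import Order.TTheory GRing.Theory Num.Theory.
Local Open Scope ring_scope.

Section BentNegabent.
Variable F : finFieldType.

Definition trm (m : nat) (z : F) : F := \sum_(k < m) z ^+ (2 ^ k).

(* coordinates of x in the basis alpha (the unique 0/1 vector c with
   x = sum_i c_i alpha_i); None cannot occur when alpha is a basis *)
Definition coords (n : nat) (alpha : 'I_n -> F) (x : F) :
    option {ffun 'I_n -> bool} :=
  [pick c : {ffun 'I_n -> bool} | x == \sum_(i < n) (c i)%:R * alpha i].

Definition wt (n : nat) (alpha : 'I_n -> F) (x : F) : nat :=
  if coords alpha x is Some c then #|[set i | c i]| else 0%N.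

Definition trb (n : nat) (z : F) : bool := trm n z == 1.

Definition walsh (n : nat) (g : F -> bool) (mu : F) : algC :=
  \sum_(x : F) (-1) ^+ (g x (+) trb n (mu * x)).

Definition nega_walsh (n : nat) (alpha : 'I_n -> F) (g : F -> bool) (mu : F)
    : algC :=
  \sum_(x : F) (-1) ^+ (g x (+) trb n (mu * x)) * 'i ^+ (wt alpha x).

Definition bent (n : nat) (g : F -> bool) : Prop :=
  forall mu : F, `|walsh n g mu| = (2 ^ n./2)%:R.

Definition negabent (n : nat) (alpha : 'I_n -> F) (g : F -> bool) : Prop :=
  forall mu : F, `|nega_walsh alpha g mu| = (2 ^ n./2)%:R.

Definition bent_negabent (n : nat) (alpha : 'I_n -> F) (g : F -> bool) : Prop :=
  bent n g /\ negabent alpha g.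

Definition Qpoly (n : nat) (x : F) : F :=
  \sum_(1 <= i < n./2) trm n (x ^+ (2 ^ i + 1))
  + trm n./2 (x ^+ (2 ^ n./2 + 1)).

Definition Qb (n : nat) (x : F) : bool := Qpoly n x == 1.

End BentNegabent.

From HB Require Import structures.
From mathcomp Require Import all_boot all_order all_algebra all_field.
From mathcomp Require Import ring zify.
Set Implicit Arguments. Unset Strict Implicit. Unset Printing Implicit Defensive.
Import Order.TTheory GRing.Theory Num.Theory.
Local Open Scope ring_scope.

(* Let s(x) be the parity of binom(wt x, 2).  Since
   i^w = (-1)^binom(w,2) ((1+i)/2 + (1-i)/2 (-1)^w) and, for a self-dual basis,
   wt x has the parity of Tr x, the nega-Hadamard transform of g at mu equals
   (1+i)/2 W_{g+s}(mu) + (1-i)/2 W_{g+s}(mu+1), whose squared modulus is the mean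
   of the squared moduli of the two Walsh values.  As a^2 + b^2 = 2 4^k forces
   a^2 = b^2 = 4^k, g is negabent iff g + s is bent.
   Both s and Q are quadratic forms with polar form Tr(x) Tr(y) + Tr(xy), so
   Q = s + Tr(v .) for some v.  Adding the linear function Tr(v .) only shifts
   the Walsh spectrum, hence f + Q is bent iff f + s is, and f + Q + s is bent
   iff f is. *)

Section BoolEmbedding.
Variable R : idomainType.

Lemma natrb_eq1 (b : bool) : (b%:R == 1 :> R) = b.
Proof. by case: b; rewrite ?eqxx // eq_sym oner_eq0. Qed.

Lemma natr_andb (a b : bool) : (a && b)%:R = a%:R * b%:R :> R.
Proof. by case: a; rewrite ?mul1r ?mul0r. Qed.

Lemma natrb_sqr (b : bool) : b%:R ^+ 2 = b%:R :> R.
Proof. by case: b; rewrite ?expr1n ?expr0n. Qed.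

Lemma idemr_natrb (a : R) : a ^+ 2 = a -> a = (a == 1)%:R.
Proof.
move=> idem_a; have : a * (a - 1) = 0 by rewrite mulrBr mulr1 -expr2 idem_a subrr.
by move/eqP; rewrite mulf_eq0 subr_eq0 => /orP[] /eqP ->; rewrite ?eqxx // eq_sym oner_eq0.
Qed.

Hypothesis pchar2R : 2 \in [pchar R].

Lemma natr_addb (a b : bool) : (a (+) b)%:R = a%:R + b%:R :> R.
Proof. by case: a; case: b; rewrite /= ?addr0 ?add0r ?(addrr_pchar2 pchar2R). Qed.

Lemma natr_odd (w : nat) : w%:R = (odd w)%:R :> R.
Proof.
rewrite -{1}(odd_double_half w) natrD -muln2 natrM (pcharf0 pchar2R) mulr0 addr0.
by case: (odd w).
Qed.

End BoolEmbedding.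

Lemma card_pchar2 (F : finFieldType) n : #|F| = (2 ^ n)%N -> 2 \in [pchar F].
Proof. by move/card_finPcharP; apply. Qed.

Section CharTwo.
Variable F : finFieldType.
Hypothesis pchar2F : 2 \in [pchar F].

Lemma exprD_2X k (x y : F) : (x + y) ^+ (2 ^ k) = x ^+ (2 ^ k) + y ^+ (2 ^ k).
Proof. by apply: exprDn_pchar; rewrite pnatX (eq_pnat _ (pcharf_eq pchar2F)) pnat_id. Qed.

Lemma sqrr_sum I (r : seq I) (P : pred I) (G : I -> F) :
  (\sum_(i <- r | P i) G i) ^+ 2 = \sum_(i <- r | P i) G i ^+ 2.
Proof. exact: (big_morph (fun x : F => x ^+ 2) (exprD_2X 1) (expr0n _ _)). Qed.

Lemma trmD m : {morph @trm F m : x y / x + y}.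
Proof. by move=> x y; rewrite /trm -big_split; apply: eq_bigr => k _; rewrite exprD_2X. Qed.

Lemma trm0 m : trm m (0 : F) = 0.
Proof. by rewrite /trm big1 // => k _; rewrite expr0n expn_eq0. Qed.

Lemma trm_sum m I (r : seq I) (P : pred I) (G : I -> F) :
  trm m (\sum_(i <- r | P i) G i) = \sum_(i <- r | P i) trm m (G i).
Proof. exact: (big_morph _ (trmD m) (trm0 m)). Qed.

Lemma trm_addn a b (z : F) : trm (a + b) z = trm a z + trm b (z ^+ (2 ^ a)).
Proof.
rewrite /trm big_split_ord; congr (_ + _).
by apply: eq_bigr => k _; rewrite /= -exprM -expnD.
Qed.

Lemma exprDS_2X k (x y : F) : (x + y) ^+ (2 ^ k + 1)
  = x ^+ (2 ^ k + 1) + y ^+ (2 ^ k + 1) + (x ^+ (2 ^ k) * y + y ^+ (2 ^ k) * x).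
Proof. by rewrite !exprD !expr1 exprD_2X; ring. Qed.

Lemma trm_sqr_fix m (z : F) :
  (0 < m)%N -> z ^+ (2 ^ m) = z -> trm m (z ^+ 2) = trm m z.
Proof.
case: m => // m _ zK; rewrite /trm big_ord_recr big_ord_recl /= -exprM -expnS zK.
by rewrite addrC; congr (_ + _); apply: eq_bigr => k _; rewrite -exprM -expnS.
Qed.

Lemma trm_idem m (z : F) :
  (0 < m)%N -> z ^+ (2 ^ m) = z -> trm m z ^+ 2 = trm m z.
Proof.
move=> m_gt0 zK; rewrite -{2}(trm_sqr_fix m_gt0 zK) /trm sqrr_sum.
by apply: eq_bigr => k _; rewrite -!exprM mulnC.
Qed.

Lemma trmZ_idem m (d z : F) : d ^+ 2 = d -> trm m (d * z) = d * trm m z.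
Proof.
by move/idemr_natrb => ->; case: (d == 1); rewrite ?mul1r // !mul0r trm0.
Qed.

End CharTwo.

Section Trace.
Variables (F : finFieldType) (n : nat).
Hypotheses (n_gt0 : (0 < n)%N) (cardF : #|F| = (2 ^ n)%N).

Let pchar2F := card_pchar2 cardF.

Lemma expr_2n (x : F) : x ^+ (2 ^ n) = x.
Proof. by rewrite -cardF expf_card. Qed.

Lemma tr_idem (z : F) : trm n z ^+ 2 = trm n z.
Proof. by apply: trm_idem; rewrite ?expr_2n. Qed.

Lemma tr_frob k (z : F) : trm n (z ^+ (2 ^ k)) = trm n z.
Proof.
elim: k => [|k IHk]; first by rewrite expr1.
by rewrite expnS mulnC exprM trm_sqr_fix ?expr_2n ?IHk.
Qed.

Lemma trbE (z : F) : trm n z = (trb n z)%:R.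
Proof. exact/idemr_natrb/tr_idem. Qed.

Lemma trbD (x y : F) : trb n (x + y) = trb n x (+) trb n y.
Proof. by rewrite {1}/trb (trmD pchar2F) !trbE -natr_addb ?natrb_eq1. Qed.

Lemma tr_frobM_sum (x y : F) :
  \sum_(0 <= j < n) trm n (x ^+ (2 ^ j) * y) = trm n x * trm n y.
Proof. by rewrite big_mkord -(trm_sum pchar2F) -mulr_suml trmZ_idem ?tr_idem.
Qed.

Lemma tr_frobM_swap (x y : F) i : (i <= n)%N ->
  trm n (y ^+ (2 ^ i) * x) = trm n (x ^+ (2 ^ (n - i)) * y).
Proof.
move=> le_in; rewrite -(tr_frob (n - i)) exprMn -exprM -expnD subnKC //.
by rewrite expr_2n mulrC.
Qed.

End Trace.

Lemma bin2D a b : 'C(a + b, 2) = ('C(a, 2) + 'C(b, 2) + a * b)%N.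
Proof.
elim: b => [|b IHb]; first by rewrite addn0 muln0 !addn0.
by rewrite addnS !binS IHb !bin1; lia.
Qed.

(* For sets A, B the sizes w = |A xor B|, i = |A :&: B|, a = |A|, b = |B| satisfy w + 2 i = a + b. *)
Lemma odd_bin2_split w i a b : (w + 2 * i = a + b)%N ->
  odd 'C(w, 2) (+) odd i = odd 'C(a, 2) (+) odd 'C(b, 2) (+) (odd a && odd b).
Proof.
move=> def_w.
have : ('C(w, 2) + 2 * ('C(i, 2) + w * i) + i * i = 'C(a, 2) + 'C(b, 2) + a * b)%N.
  have := bin2D w (i + i); have := bin2D i i; have := bin2D a b.
  by rewrite -def_w addnn -mul2n; lia.
move/(congr1 odd); rewrite !oddD !oddM /= => <-.
by case: (odd 'C(w, 2)) (odd 'C(i, 2)) (odd w) (odd i) => [] [] [] [].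
Qed.

Section SelfDualBasis.
Variables (F : finFieldType) (n : nat).
Hypotheses (n_gt0 : (0 < n)%N) (cardF : #|F| = (2 ^ n)%N).
Variable alpha : 'I_n -> F.
Hypothesis self_dual : forall i j : 'I_n, trm n (alpha i * alpha j) = (i == j)%:R.

Let pchar2F := card_pchar2 cardF.

Local Notation tr := (trm n).

Definition comb (c : {ffun 'I_n -> bool}) : F := \sum_(i < n) (c i)%:R * alpha i.

Definition supp (x : F) : {set 'I_n} := [set k | trb n (alpha k * x)].

Lemma tr_alphaM_comb j c : tr (alpha j * comb c) = (c j)%:R.
Proof.
rewrite mulr_sumr (trm_sum pchar2F) (bigD1 j) //= mulrCA trmZ_idem ?natrb_sqr //.
rewrite self_dual eqxx mulr1 big1 ?addr0 // => i /negbTE neq_ij.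
by rewrite mulrCA trmZ_idem ?natrb_sqr // self_dual eq_sym neq_ij mulr0.
Qed.

Lemma comb_inj : injective comb.
Proof.
move=> c1 c2 eq_c; apply/ffunP => j.
by rewrite -[c1 j](@natrb_eq1 F) -tr_alphaM_comb eq_c tr_alphaM_comb natrb_eq1.
Qed.

Lemma comb_supp (x : F) : x = comb [ffun k => k \in supp x].
Proof.
have : x \in codom comb.
  apply: inj_card_onto; first exact: comb_inj.
  by rewrite cardF card_ffun card_bool card_ord.
case/codomP => c ->; congr comb; apply/ffunP => k.
by rewrite ffunE inE /trb tr_alphaM_comb natrb_eq1.
Qed.

Lemma wtE (x : F) : wt alpha x = #|supp x|.
Proof.
rewrite /wt /coords; case: pickP => [c /eqP def_x | /(_ [ffun k => k \in supp x])].
  by apply: eq_card => k; rewrite !inE def_x /trb -/(comb c) tr_alphaM_comb natrb_eq1.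
by rewrite -/(comb _) -comb_supp eqxx.
Qed.

Lemma tr_alpha k : tr (alpha k) = 1.
Proof. by rewrite -(trm_sqr_fix n_gt0 (expr_2n cardF _)) expr2 self_dual eqxx. Qed.

Lemma supp1 : supp 1 = setT.
Proof. by apply/setP => k; rewrite !inE mulr1 /trb tr_alpha eqxx. Qed.

Lemma natr_card_suppI (x y : F) : #|supp x :&: supp y|%:R = tr (x * y).
Proof.
rewrite -sum1_card natr_sum {2}(comb_supp y) mulr_sumr (trm_sum pchar2F) big_mkcond /=.
apply: eq_bigr => k _; rewrite mulrCA trmZ_idem ?natrb_sqr // ffunE (trbE n_gt0 cardF).
by rewrite mulrC -natr_andb [x * _]mulrC !inE; case: (_ && _).
Qed.

Lemma odd_card_suppI (x y : F) : odd #|supp x :&: supp y| = trb n (x * y).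
Proof. by rewrite /trb -natr_card_suppI (natr_odd pchar2F) natrb_eq1. Qed.

Lemma odd_wt (x : F) : odd (wt alpha x) = trb n x.
Proof. by rewrite wtE -[in RHS](mulr1 x) -odd_card_suppI supp1 setIT. Qed.

Lemma suppD (x y : F) : supp (x + y) = (supp x :|: supp y) :\: (supp x :&: supp y).
Proof.
apply/setP => k; rewrite !inE mulrDr (trbD n_gt0 cardF).
by case: (trb n (alpha k * x)); case: (trb n (alpha k * y)).
Qed.

Lemma wtD (x y : F) :
  (wt alpha (x + y)%R + 2 * #|supp x :&: supp y| = wt alpha x + wt alpha y)%N.
Proof.
have IsubU : supp x :&: supp y \subset supp x :|: supp y.
  exact: subset_trans (subsetIl _ _) (subsetUl _ _).
have := cardsID (supp x :&: supp y) (supp x :|: supp y).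
rewrite !wtE suppD (setIidPr IsubU); have := cardsUI (supp x) (supp y); lia.
Qed.

(* The second elementary symmetric function of the coordinates of x, mod 2. *)
Definition esym2 (x : F) : bool := odd 'C(wt alpha x, 2).

Lemma esym2D (x y : F) : esym2 (x + y)
  = esym2 x (+) esym2 y (+) (trb n x && trb n y) (+) trb n (x * y).
Proof.
have := odd_bin2_split (wtD x y); rewrite odd_card_suppI !odd_wt => <-.
by rewrite /esym2 -addbA addbb addbF.
Qed.

Lemma additive_trace_repr (D : F -> F) : {morph D : x y / x + y} ->
    (forall k, D (alpha k) ^+ 2 = D (alpha k)) ->
  exists v, forall x, D x = tr (v * x).
Proof.
move=> DD idemD; exists (\sum_k D (alpha k) * alpha k) => x.
have D0 : D 0 = 0 by apply: (addrI (D 0)); rewrite -DD !addr0.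
rewrite {1}(comb_supp x) (big_morph _ DD D0) mulr_suml (trm_sum pchar2F).
apply: eq_bigr => k _; rewrite ffunE inE -mulrA trmZ_idem // (trbE n_gt0 cardF).
by case: (trb _ _); rewrite ?mul1r ?mulr1 // !mul0r ?mulr0 D0.
Qed.

End SelfDualBasis.

Lemma big_nat_double (V : nmodType) m (a : nat -> V) : (0 < m)%N ->
  \sum_(0 <= j < m + m) a j
    = a 0%N + a m + \sum_(1 <= i < m) (a i + a (m + m - i)%N).
Proof.
move=> m_gt0; rewrite big_split /= (big_cat_nat _ (n := 1)) ?big_nat1 //; last lia.
rewrite (big_cat_nat _ (n := m)) //=; last lia.
rewrite (big_ltn (m := m)); last lia.
have -> : \sum_(m.+1 <= j < m + m) a j = \sum_(1 <= i < m) a (m + m - i)%N.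
  rewrite (big_addn 0 (m + m) m.+1) (big_addn 0 m 1) big_nat_rev /=.
  have -> : (m + m - m.+1 = m - 1)%N by lia.
  by apply: eq_big_nat => i i_lt; congr (a _); lia.
by rewrite !addrA [a 0%N + _ + a m]addrAC.
Qed.

Section QuadraticQ.
Variables (F : finFieldType) (m : nat).
Hypotheses (m_gt0 : (0 < m)%N) (cardF : #|F| = (2 ^ (m + m))%N).
Local Notation n := (m + m)%N.
Local Notation tr := (trm n).

Let n_gt0 : (0 < n)%N. Proof. lia. Qed.
Let pchar2F := card_pchar2 cardF.
Let half_n : n./2 = m. Proof. by rewrite addnn doubleK. Qed.

Lemma QpolyD (x y : F) :
  Qpoly n (x + y) = Qpoly n x + Qpoly n y + tr x * tr y + tr (x * y).
Proof.
(* The cross terms Tr(x^(2^j) y) come in pairs j, n - j for 0 < j < m plus j = m;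
   with j = 0 they make up all of Tr x * Tr y. *)
pose G j := tr (x ^+ (2 ^ j) * y).
have inner i : (1 <= i < m)%N -> tr ((x + y) ^+ (2 ^ i + 1))
    = tr (x ^+ (2 ^ i + 1)) + tr (y ^+ (2 ^ i + 1)) + (G i + G (n - i)%N).
  case/andP=> _ lt_im; rewrite (exprDS_2X pchar2F) !(trmD pchar2F).
  by rewrite (tr_frobM_swap n_gt0 cardF x y) //; lia.
have middle : trm m ((x + y) ^+ (2 ^ m + 1))
    = trm m (x ^+ (2 ^ m + 1)) + trm m (y ^+ (2 ^ m + 1)) + G m.
  rewrite (exprDS_2X pchar2F) !(trmD pchar2F) /G trm_addn exprMn -exprM -expnD.
  by rewrite (expr_2n cardF) [x * _]mulrC.
rewrite -(tr_frobM_sum n_gt0 cardF) (big_nat_double _ m_gt0) expn0 expr1.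
rewrite /Qpoly half_n (eq_big_nat _ _ inner) !big_split /= middle /G.
rewrite -[LHS]addr0 -(addrr_pchar2 pchar2F (tr (x * y))); ring.
Qed.

Lemma Qpoly_idem (x : F) : Qpoly n x ^+ 2 = Qpoly n x.
Proof.
rewrite /Qpoly half_n (exprD_2X pchar2F 1); congr (_ + _).
  by rewrite (sqrr_sum pchar2F); apply: eq_bigr => i _; rewrite (tr_idem n_gt0 cardF).
apply: (trm_idem pchar2F) => //.
by rewrite -exprM mulnDl mul1n -expnD exprD (expr_2n cardF) exprD expr1 mulrC.
Qed.

Variable alpha : 'I_n -> F.
Hypothesis self_dual : forall i j : 'I_n, tr (alpha i * alpha j) = (i == j)%:R.

Lemma Qb_esym2_trace :
  exists v, forall x, Qb n x = esym2 alpha x (+) trb n (v * x).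
Proof.
pose D x := Qpoly n x + (esym2 alpha x)%:R.
have D_additive : {morph D : x y / x + y}.
  move=> x y; rewrite /D QpolyD (esym2D n_gt0 cardF self_dual).
  rewrite !(natr_addb pchar2F) natr_andb -!(trbE n_gt0 cardF).
  set B := trm n x * trm n y + trm n (x * y).
  by rewrite -[RHS]addr0 -(addrr_pchar2 pchar2F B) /B; ring.
have D_idem k : D (alpha k) ^+ 2 = D (alpha k).
  by rewrite (exprD_2X pchar2F 1) Qpoly_idem natrb_sqr.
have [v Dv] := additive_trace_repr n_gt0 cardF self_dual D_additive D_idem.
exists v => x; rewrite /Qb -[Qpoly n x](addrK_pchar2 pchar2F (esym2 alpha x)%:R).
by rewrite -/(D x) Dv (trbE n_gt0 cardF) -natr_addb // addbC natrb_eq1.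
Qed.

End QuadraticQ.

(* The sign (-1)^binom(w,2) runs through 1, 1, -1, -1 as w runs mod 4; the bracket
   is 1 for even w and i for odd w. *)
Lemma expCi_sign (w : nat) : 'i ^+ w
  = (-1) ^+ odd 'C(w, 2) * ((1 + 'i) / 2 + (1 - 'i) / 2 * (-1) ^+ odd w) :> algC.
Proof.
have two_neq0 : (2 : algC) != 0 by rewrite pnatr_eq0.
have -> : (1 + 'i) / 2 + (1 - 'i) / 2 * (-1) ^+ odd w = if odd w then 'i else 1 :> algC.
  by case: (odd w); rewrite ?expr1 ?expr0; field.
elim: w => [|w IHw]; first by rewrite mulr1.
rewrite exprS IHw binS bin1 oddD oddS signr_addb.
case: (odd w) => /=; last by rewrite mulr1 mulrC.
by rewrite mulrCA mulCii !mulrN1 mulr1.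
Qed.

Lemma normC_nega_comb (a b : algC) : a \is Num.real -> b \is Num.real ->
  `|(1 + 'i) / 2 * a + (1 - 'i) / 2 * b| ^+ 2 = (a ^+ 2 + b ^+ 2) / 2.
Proof.
move=> a_real b_real; have two_neq0 : (2 : algC) != 0 by rewrite pnatr_eq0.
have half_real : (2^-1 : algC) \is Num.real by rewrite rpredV realn.
have -> : (1 + 'i) / 2 * a + (1 - 'i) / 2 * b = (a + b) / 2 + 'i * ((a - b) / 2).
  by field.
by rewrite normC2_rect ?rpredM ?rpredD ?rpredN //; field.
Qed.

Lemma normC_intr (a : int) : `|a%:~R : algC| = (`|a|%N)%:R.
Proof. by rewrite -intr_norm -abszE. Qed.

Lemma sqrC_intr (a : int) : (a%:~R : algC) ^+ 2 = (`|a| ^ 2)%N%:R.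
Proof. by rewrite -real_normK ?realz // normC_intr natrX. Qed.

Lemma normC_intr_eq_pow2 (a : int) k :
  `|a%:~R : algC| = (2 ^ k)%:R <-> (`|a| ^ 2 = 4 ^ k)%N.
Proof.
rewrite normC_intr -[4%N]/(2 ^ 2)%N expnAC; split=> [/eqP | /eqP].
  by rewrite eqr_nat => /eqP ->.
by rewrite eqn_exp2r // => /eqP ->.
Qed.

Lemma normC_nega_comb_eq_pow2 (a b : int) k :
    `|(1 + 'i) / 2 * a%:~R + (1 - 'i) / 2 * b%:~R| = (2 ^ k)%:R :> algC
  <-> (`|a| ^ 2 + `|b| ^ 2 = 2 * 4 ^ k)%N.
Proof.
have two_neq0 : (2 : algC) != 0 by rewrite pnatr_eq0.
rewrite -[4%N]/(2 ^ 2)%N expnAC.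
set z := _ + _; have normz2 : `|z| ^+ 2 = (`|a| ^ 2 + `|b| ^ 2)%N%:R / 2.
  by rewrite normC_nega_comb ?realz // !sqrC_intr natrD.
split=> [normz | sum_sqr].
  apply/eqP; rewrite -(eqr_nat algC) natrM natrX -normz normz2.
  by apply/eqP; field.
apply/eqP; rewrite -(eqrXn2 (_ : 0 < 2)%N) ?normr_ge0 ?ler0n // normz2 sum_sqr.
by rewrite natrM natrX; apply/eqP; field.
Qed.

Lemma sqr_addn_eq_double_pow4 (x y k : nat) :
  (x ^ 2 + y ^ 2 = 2 * 4 ^ k)%N -> (x ^ 2 = 4 ^ k)%N.
Proof.
elim: k x y => [|k IHk] x y.
  by case: x => [|[|x]]; case: y => [|[|y]]; nia.
rewrite -(odd_double_half x) -(odd_double_half y) [(4 ^ k.+1)%N]expnS -!muln2.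
case: (odd x) (odd y) => [] [] /= sum_sqr; try nia.
by have := IHk x./2 y./2; nia.
Qed.

Section Walsh.
Variables (F : finFieldType) (n : nat).
Hypotheses (n_gt0 : (0 < n)%N) (cardF : #|F| = (2 ^ n)%N).
Variable alpha : 'I_n -> F.
Hypothesis self_dual : forall i j : 'I_n, trm n (alpha i * alpha j) = (i == j)%:R.

Lemma walsh_intr (g : F -> bool) mu :
  walsh n g mu = (\sum_x (-1) ^+ (g x (+) trb n (mu * x)) : int)%:~R.
Proof. by rewrite rmorph_sum; apply: eq_bigr => x _; rewrite rmorph_sign. Qed.

Lemma eq_bent (g g' : F -> bool) : g =1 g' -> bent n g <-> bent n g'.
Proof.
move=> eq_g; have eq_walsh mu : walsh n g mu = walsh n g' mu.
  by apply: eq_bigr => x _; rewrite eq_g.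
by split=> bent_g mu; [rewrite -eq_walsh | rewrite eq_walsh].
Qed.

Lemma walsh_addr_trace (g : F -> bool) v mu :
  walsh n (fun x => g x (+) trb n (v * x)) mu = walsh n g (mu + v).
Proof.
by apply: eq_bigr => x _; rewrite mulrDl (trbD n_gt0 cardF) addbAC -addbA.
Qed.

Lemma bent_addr_trace (g : F -> bool) v :
  bent n (fun x => g x (+) trb n (v * x)) <-> bent n g.
Proof.
split=> bent_g mu; last by rewrite walsh_addr_trace.
by rewrite -(subrK v mu) -walsh_addr_trace.
Qed.

Lemma nega_walshE (g : F -> bool) mu : nega_walsh alpha g mu
  = (1 + 'i) / 2 * walsh n (fun x => g x (+) esym2 alpha x) mu
  + (1 - 'i) / 2 * walsh n (fun x => g x (+) esym2 alpha x) (mu + 1).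
Proof.
rewrite /nega_walsh /walsh !mulr_sumr -big_split; apply: eq_bigr => x _ /=.
rewrite expCi_sign (odd_wt n_gt0 cardF self_dual) (mulrDl mu 1 x) mul1r (trbD n_gt0 cardF).
rewrite /esym2 !signr_addb.
(* Abstracting the signs first: [ring] on the unfolded algC terms exhausts memory. *)
move: ((1 + 'i) / 2) ((1 - 'i) / 2) ((-1) ^+ g x) ((-1) ^+ trb n (mu * x)) => p q s t.
move: ((-1) ^+ odd 'C(wt alpha x, 2)) ((-1) ^+ trb n x) => u w; ring.
Qed.

Lemma negabentE (g : F -> bool) :
  negabent alpha g <-> bent n (fun x => g x (+) esym2 alpha x).
Proof.
split=> bent_g mu.
  have := bent_g mu; rewrite nega_walshE !walsh_intr normC_nega_comb_eq_pow2.
  by move/sqr_addn_eq_double_pow4; rewrite normC_intr_eq_pow2.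
rewrite nega_walshE !walsh_intr normC_nega_comb_eq_pow2.
have := bent_g mu; have := bent_g (mu + 1).
by rewrite !walsh_intr !normC_intr_eq_pow2 => -> ->; rewrite addnn -mul2n.
Qed.

Lemma bent_negabentE (g : F -> bool) : bent_negabent alpha g
  <-> bent n g /\ bent n (fun x => g x (+) esym2 alpha x).
Proof. by rewrite /bent_negabent negabentE. Qed.

End Walsh.

Theorem corollary2 (n : nat) (F : finFieldType) (alpha : 'I_n -> F)
  (f : F -> bool) :
  ~~ odd n -> (2 <= n)%N -> #|F| = (2 ^ n)%N ->
  (forall i j : 'I_n, trm n (alpha i * alpha j) = (i == j)%:R) ->
  bent_negabent alpha f <-> bent_negabent alpha (fun x => f x (+) Qb n x).
Proof.
move=> even_n n_ge2 cardF self_dual.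
have [m def_n] : exists m, n = (m + m)%N.
  by exists n./2; rewrite addnn -[LHS]odd_double_half (negbTE even_n).
subst n; have m_gt0 : (0 < m)%N by lia.
have n_gt0 : (0 < m + m)%N by lia.
have [v Qv] := Qb_esym2_trace m_gt0 cardF self_dual.
rewrite !(bent_negabentE n_gt0 cardF self_dual).
have fQ : bent (m + m) (fun x => f x (+) Qb (m + m) x)
    <-> bent (m + m) (fun x => f x (+) esym2 alpha x).
  apply: iff_trans (bent_addr_trace n_gt0 cardF _ v); apply: eq_bent => x.
  by rewrite Qv addbA.
have fQs : bent (m + m) (fun x => f x (+) Qb (m + m) x (+) esym2 alpha x)
    <-> bent (m + m) f.
  apply: iff_trans (bent_addr_trace n_gt0 cardF _ v); apply: eq_bent => x.
  by rewrite Qv addbA addbAC addbK.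
by rewrite fQ fQs; tauto.
Qed.
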